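(* Let $G$ be a countably infinite connected HE-homogeneous graph that contains a pair of distinct non-adjacent vertices. Then $G$ has no finite maximal independent sets and no finite maximal cliques. In particular, every vertex of $G$ has infinite degree and infinite codegree.
   Context: All graphs are undirected and loopless; subgraphs are induced. The codegree of a vertex is its degree in the complement graph. A homomorphism maps adjacent vertices to adjacent vertices. $G$ is HE-homogeneous if every homomorphism between finite induced subgraphs of $G$ is the restriction of a surjective endomorphism of $G$. *)

From Stdlib Require Import List Relations.
Import ListNotations.

Record simple_graph (V : Type) (adj : V -> V -> Prop) : Prop := {
  sg_sym : forall x y, adj x y -> adj y x;
  sg_irrefl : forall x, ~ adj x x
}.

Definition finite_set {V : Type} (A : V -> Prop) : Prop :=
  exists l : list V, forall x, A x <-> In x l.

Definition countably_infinite (V : Type) : Prop :=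
  exists f : nat -> V,
    (forall m n, f m = f n -> m = n) /\ (forall v, exists n, f n = v).

Definition connected {V : Type} (adj : V -> V -> Prop) : Prop :=
  forall x y, clos_refl_trans V adj x y.

(* h (its values on A) is a homomorphism from the induced subgraph on A
   to the induced subgraph on B. *)
Definition sub_hom {V : Type} (adj : V -> V -> Prop)
    (A B : V -> Prop) (h : V -> V) : Prop :=
  (forall x, A x -> B (h x)) /\
  (forall x y, A x -> A y -> adj x y -> adj (h x) (h y)).

Definition endomorphism {V : Type} (adj : V -> V -> Prop) (g : V -> V) : Prop :=
  forall x y, adj x y -> adj (g x) (g y).

Definition surjective_map {V : Type} (g : V -> V) : Prop :=
  forall y, exists x, g x = y.

Definition HE_homogeneous {V : Type} (adj : V -> V -> Prop) : Prop :=
  forall (A B : V -> Prop) (h : V -> V),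
    finite_set A -> finite_set B -> sub_hom adj A B h ->
    exists g : V -> V, endomorphism adj g /\ surjective_map g /\
      (forall x, A x -> g x = h x).

Definition independent {V : Type} (adj : V -> V -> Prop) (S : V -> Prop) : Prop :=
  forall x y, S x -> S y -> ~ adj x y.

Definition clique {V : Type} (adj : V -> V -> Prop) (S : V -> Prop) : Prop :=
  forall x y, S x -> S y -> x <> y -> adj x y.

Definition maximal_independent {V : Type} (adj : V -> V -> Prop) (S : V -> Prop) : Prop :=
  independent adj S /\
  forall T : V -> Prop, independent adj T -> (forall x, S x -> T x) -> forall x, T x -> S x.

Definition maximal_clique {V : Type} (adj : V -> V -> Prop) (S : V -> Prop) : Prop :=
  clique adj S /\
  forall T : V -> Prop, clique adj T -> (forall x, S x -> T x) -> forall x, T x -> S x.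

Definition neighbours {V : Type} (adj : V -> V -> Prop) (v : V) : V -> Prop :=
  fun w => adj v w.

Definition co_neighbours {V : Type} (adj : V -> V -> Prop) (v : V) : V -> Prop :=
  fun w => w <> v /\ ~ adj v w.

(* If S were a finite maximal independent set, collapsing S onto one end x of
   a non-edge is a homomorphism; a preimage of the other end y under a
   surjective extension lies outside S, hence (by maximality) next to S, so y
   would be adjacent to x.  If S were a finite maximal clique, connectedness
   gives an edge u z leaving S; the homomorphism fixing S \ {u} and sending z
   to u extends to an endomorphism g, and g u is then adjacent to every vertex
   of S, so by maximality g u lies in S and is adjacent to itself.  Finally, a
   vertex of finite degree (codegree) lies in a finite maximal clique
   (independent set), obtained greedily inside its finite neighbourhood
   (non-neighbourhood). *)
From Stdlib Require Import List Relations.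
From Stdlib Require Import Classical ClassicalEpsilon.
Import ListNotations.

Section FiniteSets.
Variable V : Type.

Lemma finite_set_subset (A B : V -> Prop) :
  finite_set A -> (forall x, B x -> A x) -> finite_set B.
Proof.
  intros [l Hl] HBA.
  assert (Hfilter : exists l', forall x, (In x l /\ B x) <-> In x l').
  { clear Hl. induction l as [|a l IH].
    - exists []. simpl. tauto.
    - destruct IH as [l' Hl'].
      destruct (classic (B a)) as [Ba|nBa].
      + exists (a :: l'). intro x. simpl. rewrite <- Hl'.
        split; [intros [[<-|H] Bx]; auto | intros [<-|[H Bx]]; auto].
      + exists l'. intro x. simpl. rewrite <- Hl'.
        split; [intros [[<-|H] Bx]; [contradiction|auto] | intros [H Bx]; auto]. }
  destruct Hfilter as [l' Hl']. exists l'.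
  intro x. rewrite <- Hl', <- Hl. split; [intro Bx; auto | tauto].
Qed.

Lemma finite_set_add (A : V -> Prop) (z : V) :
  finite_set A -> finite_set (fun x => A x \/ x = z).
Proof.
  intros [l Hl]. exists (z :: l). intro x. simpl. rewrite <- Hl. intuition.
Qed.

Lemma finite_set_singleton (z : V) : finite_set (fun x => x = z).
Proof. exists [z]. intro x. simpl. intuition. Qed.

End FiniteSets.

Lemma clos_rt_crossing_edge {V : Type} (R : V -> V -> Prop) (S : V -> Prop) a b :
  clos_refl_trans V R a b -> S a -> ~ S b -> exists u z, S u /\ ~ S z /\ R u z.
Proof.
  intro Hab. apply clos_rt_rt1n in Hab. induction Hab as [a|a m b Ham Hmb IH].
  - intros; contradiction.
  - intros Sa nSb. destruct (classic (S m)) as [Sm|nSm].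
    + apply IH; auto.
    + exists a, m. auto.
Qed.

Section Cliques.
Variables (V : Type) (R : V -> V -> Prop).

Lemma clique_sub (S T : V -> Prop) :
  clique R T -> (forall x, S x -> T x) -> clique R S.
Proof. intros HT HST x y Sx Sy. apply HT; auto. Qed.

Lemma maximal_clique_inhabited (S : V -> Prop) (x : V) :
  maximal_clique R S -> exists a, S a.
Proof.
  intros [_ HM]. apply NNPP. intro Hempty.
  apply Hempty. exists x. apply (HM (fun z => z = x)).
  - intros p q -> -> Hpq. congruence.
  - intros p Sp. exfalso. eauto.
  - reflexivity.
Qed.

Lemma greedy_clique (v : V) (l : list V) :
  exists C : list V, In v C /\ clique R (fun x => In x C) /\
    forall a, In a l -> In a C \/ ~ clique R (fun x => In x C \/ x = a).
Proof.
  induction l as [|a l IH].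
  - exists [v]. split; [simpl; auto | split; [|intros a []]].
    intros x y [<-|[]] [<-|[]] Hxy. congruence.
  - destruct IH as [C [HvC [HC Hscan]]].
    destruct (classic (clique R (fun x => In x C \/ x = a))) as [Hadd|Hno].
    + exists (a :: C). split; [simpl; auto | split].
      * apply (clique_sub _ _ Hadd). intros x [<-|Hx]; auto.
      * intros b [<-|Hb]; [left; simpl; auto|].
        destruct (Hscan b Hb) as [HbC|Hnb]; [left; simpl; auto | right].
        intro Hb'. apply Hnb. apply (clique_sub _ _ Hb'). intros x [Hx|<-]; simpl; auto.
    + exists C. split; [auto | split; [auto|]].
      intros b [<-|Hb]; [right; auto | apply Hscan; auto].
Qed.

Lemma finite_maximal_clique_of_finite_partners (v : V) :
  finite_set (fun t => t <> v /\ R v t) ->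
  exists S, finite_set S /\ maximal_clique R S.
Proof.
  intros [l Hl]. destruct (greedy_clique v l) as [C [HvC [HC Hscan]]].
  exists (fun x => In x C). split; [exists C; intro x; tauto | split; [exact HC|]].
  intros T HT HCT t Tt.
  destruct (classic (t = v)) as [->|Htv]; [exact HvC|].
  assert (Hlt : In t l).
  { apply Hl. split; [exact Htv|]. apply HT; auto. }
  destruct (Hscan t Hlt) as [HtC|Hno]; [exact HtC|].
  exfalso. apply Hno. apply (clique_sub _ _ HT).
  intros x [HxC| ->]; auto.
Qed.

End Cliques.

Section Graph.
Variables (V : Type) (adj : V -> V -> Prop).
Hypothesis Hsg : simple_graph V adj.

Lemma maximal_independent_dominating (S : V -> Prop) (w : V) :
  maximal_independent adj S -> ~ S w -> exists s, S s /\ adj s w.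
Proof.
  intros [HI HM] nSw. apply NNPP. intro Hno. apply nSw.
  apply (HM (fun z => S z \/ z = w)); [|auto|auto].
  intros a b [Sa| ->] [Sb| ->] Hab.
  - exact (HI a b Sa Sb Hab).
  - apply Hno. eauto.
  - apply Hno. exists b. split; [auto|]. apply (sg_sym _ _ Hsg). auto.
  - exact (sg_irrefl _ _ Hsg w Hab).
Qed.

Lemma maximal_clique_absorb (S : V -> Prop) (w : V) :
  maximal_clique adj S -> (forall s, S s -> adj w s) -> S w.
Proof.
  intros [HC HM] Hw. apply (HM (fun z => S z \/ z = w)); [|auto|auto].
  intros p q [Sp| ->] [Sq| ->] Hpq.
  - apply HC; auto.
  - apply (sg_sym _ _ Hsg). auto.
  - auto.
  - congruence.
Qed.

Lemma maximal_independent_of_complement (S : V -> Prop) :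
  maximal_clique (fun a b => ~ adj a b) S -> maximal_independent adj S.
Proof.
  intros [HC HM]. split.
  - intros p q Sp Sq. destruct (classic (p = q)) as [->|Hpq].
    + apply (sg_irrefl _ _ Hsg).
    + apply HC; auto.
  - intros T HT. apply HM. intros p q Tp Tq _. apply HT; auto.
Qed.

Hypothesis HE : HE_homogeneous adj.
Hypothesis Hnonedge : exists x y : V, x <> y /\ ~ adj x y.

Lemma no_finite_maximal_independent (S : V -> Prop) :
  finite_set S -> ~ maximal_independent adj S.
Proof.
  intros HS HSmax. destruct Hnonedge as [x [y [Hxy Hnxy]]].
  destruct (HE S (fun w => w = x) (fun _ => x) HS (finite_set_singleton V x))
    as [g [Hg [Hsurj Hgx]]].
  { split; [auto|]. intros a b Sa Sb Hab. destruct HSmax as [HI _].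
    exfalso. exact (HI a b Sa Sb Hab). }
  destruct (Hsurj y) as [w Hw].
  assert (nSw : ~ S w) by (intro Sw; rewrite Hgx in Hw; auto).
  destruct (maximal_independent_dominating S w HSmax nSw) as [s [Ss Hsw]].
  apply Hnxy. rewrite <- Hw, <- (Hgx s Ss). apply Hg. exact Hsw.
Qed.

Hypothesis Hconn : connected adj.

Lemma no_finite_maximal_clique (S : V -> Prop) :
  finite_set S -> ~ maximal_clique adj S.
Proof.
  intros HS HSmax. destruct Hnonedge as [x [y [Hxy Hnxy]]].
  pose proof (proj1 HSmax) as HC.
  assert (Hout : exists b, ~ S b).
  { destruct (classic (S x)) as [Sx|nSx]; [|eauto].
    exists y. intro Sy. apply Hnxy. apply HC; auto. }
  destruct Hout as [b nSb].
  destruct (maximal_clique_inhabited V adj S x HSmax) as [a Sa].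
  destruct (clos_rt_crossing_edge adj S a b (Hconn a b) Sa nSb)
    as [u [z [Su [nSz Huz]]]].
  set (h := fun w => if excluded_middle_informative (w = z) then u else w).
  assert (hz : h z = u).
  { unfold h. destruct (excluded_middle_informative (z = z)); congruence. }
  assert (hw : forall w, w <> z -> h w = w).
  { intros w Hw. unfold h. destruct (excluded_middle_informative (w = z)); congruence. }
  set (A := fun w => (S w /\ w <> u) \/ w = z).
  assert (HA : finite_set A).
  { apply (finite_set_subset V (fun w => S w \/ w = z)); [apply finite_set_add; exact HS|].
    intros w [[Sw _]| ->]; auto. }
  destruct (HE A S h HA HS) as [g [Hg [_ Hgh]]].
  - split.
    + intros w [[Sw Hwu]| ->]; [rewrite hw; congruence | rewrite hz; auto].
    + intros p q [[Sp Hpu]| ->] [[Sq Hqu]| ->] Hpq.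
      * rewrite !hw by congruence. exact Hpq.
      * rewrite hz, hw by congruence. apply HC; auto.
      * rewrite hz, hw by congruence. apply HC; auto.
      * exfalso. exact (sg_irrefl _ _ Hsg z Hpq).
  - assert (Hgu : forall s, S s -> adj (g u) s).
    { intros s Ss. destruct (classic (s = u)) as [->|Hsu].
      - rewrite <- hz at 2. rewrite <- Hgh by (right; reflexivity). apply Hg. exact Huz.
      - rewrite <- (hw s) by congruence. rewrite <- Hgh by (left; auto).
        apply Hg. apply HC; auto. }
    apply (sg_irrefl _ _ Hsg (g u)).
    apply Hgu. apply (maximal_clique_absorb S (g u) HSmax Hgu).
Qed.

End Graph.

Theorem proposition5p5 (V : Type) (adj : V -> V -> Prop) :
  simple_graph V adj ->
  countably_infinite V ->
  connected adj ->
  HE_homogeneous adj ->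
  (exists x y : V, x <> y /\ ~ adj x y) ->
  (forall S : V -> Prop, finite_set S -> ~ maximal_independent adj S) /\
  (forall S : V -> Prop, finite_set S -> ~ maximal_clique adj S) /\
  (forall v : V, ~ finite_set (neighbours adj v) /\ ~ finite_set (co_neighbours adj v)).
Proof.
  intros Hsg _ Hconn HE Hnonedge.
  pose proof (no_finite_maximal_independent V adj Hsg HE Hnonedge) as NoIndep.
  pose proof (no_finite_maximal_clique V adj Hsg HE Hnonedge Hconn) as NoClique.
  split; [exact NoIndep | split; [exact NoClique|]].
  intro v. split; intro Hfin.
  - destruct (finite_maximal_clique_of_finite_partners V adj v) as [S [HS HSmax]].
    { apply (finite_set_subset V _ _ Hfin). intros t [_ Hvt]. exact Hvt. }
    exact (NoClique S HS HSmax).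
  - destruct (finite_maximal_clique_of_finite_partners V (fun a b => ~ adj a b) v Hfin)
      as [S [HS HSmax]].
    exact (NoIndep S HS (maximal_independent_of_complement V adj Hsg S HSmax)).
Qed.
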